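(* Consider a single-machine instance as defined in the context in which all jobs have the same weight ($w_j=w_k$ for all $j,k\in J$). Then the schedule produced by the WSPT rule, i.e. any schedule that orders the jobs in nondecreasing order of $p_j/w_j$ (equivalently, nondecreasing processing time), is optimal.
   Context: An instance consists of a finite set $J$ of jobs, each job $j$ having a processing time $p_j>0$ and a weight $w_j>0$, a common deadline $d\ge 0$, and a single machine. A schedule is a sequence $\pi$ containing every job of $J$ exactly once, processed consecutively without idle time starting at time $0$: the start time of job $j$ is $S_j=\sum_{k \text{ before } j \text{ in } \pi} p_k$ and its completion time is $C_j=S_j+p_j$. Let $J_{\mathrm{pri}}(\pi)=\{j : S_j<d\}$ and $J_{\mathrm{late}}(\pi)=\{j: S_j\ge d\}$. The cost of $\pi$ is $$\phi(\pi)=\sum_{j\in J_{\mathrm{pri}}(\pi)} w_j p_j+\sum_{j\in J_{\mathrm{late}}(\pi)} w_j\,(C_j-d),$$ and $\pi$ is optimal if $\phi(\pi)$ is minimal over all schedules of $J$. (This models total weighted flowtime minimization where each release date $r_j\le d$ is a decision variable.) *)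

From mathcomp Require Import all_boot all_order all_algebra.
Set Implicit Arguments. Unset Strict Implicit. Unset Printing Implicit Defensive.
Import Order.TTheory GRing.Theory Num.Theory.
Local Open Scope ring_scope.

Section Sched.
Variables (R : realFieldType) (J : finType).

Definition is_schedule (s : seq J) : Prop := uniq s /\ forall j : J, j \in s.

Definition start_time (p : J -> R) (s : seq J) (j : J) : R :=
  \sum_(k <- take (index j s) s) p k.

Definition completion_time (p : J -> R) (s : seq J) (j : J) : R :=
  start_time p s j + p j.

Definition cost (p w : J -> R) (d : R) (s : seq J) : R :=
  \sum_(j : J) (if start_time p s j < d then w j * p j
                else w j * (completion_time p s j - d)).

Definition optimal (p w : J -> R) (d : R) (s : seq J) : Prop :=
  is_schedule s /\ forall s' : seq J, is_schedule s' -> cost p w d s <= cost p w d s'.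

Definition wspt (p w : J -> R) (s : seq J) : Prop :=
  sorted (fun j k => p j / w j <= p k / w k) s.
End Sched.

(* With a common weight c, every job contributes c p_j plus c times its overrun
   max(S_j - d, 0), and S_j is the total processing time of the jobs placed
   before j. Hence the cost of a schedule is c * sum p_j plus c times the sum,
   over the positions i, of the overrun of the i-th prefix sum. The overrun is
   nondecreasing, and a schedule sorted by processing time minimises every
   prefix sum simultaneously: the jobs it has in its first i positions but the
   competitor has not are each no longer than the jobs in the reverse
   situation, and there are equally many of both. *)
From mathcomp Require Import all_boot all_order all_algebra.
Set Implicit Arguments. Unset Strict Implicit. Unset Printing Implicit Defensive.
Import Order.TTheory GRing.Theory Num.Theory.
Local Open Scope ring_scope.

Section PrefixSums.
Variables (R : numDomainType) (T : finType) (p : T -> R).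

Lemma sum_le_of_card_eq (X Y : {set T}) :
  #|X| = #|Y| -> {in X & Y, forall x y, p x <= p y} ->
  \sum_(x in X) p x <= \sum_(y in Y) p y.
Proof.
move=> cardXY leXY.
have : (\sum_(x in X) p x) *+ #|Y| <= (\sum_(y in Y) p y) *+ #|X|.
  rewrite -sumrMnl -sumr_const.
  by apply: ler_sum => x xX; rewrite -sumr_const; apply: ler_sum => y yY; apply: leXY.
rewrite cardXY lerMn2r => /orP[/eqP Y0|//].
have X0 : #|X| = 0%N by rewrite cardXY Y0.
by move/eqP: X0; move/eqP: Y0; rewrite !cards_eq0 => /eqP-> /eqP->; rewrite !big_set0.
Qed.

Lemma sorted_take_sum_le (s t : seq T) (i : nat) :
  uniq s -> perm_eq s t -> sorted (fun x y => p x <= p y) s ->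
  \sum_(x <- take i s) p x <= \sum_(x <- take i t) p x.
Proof.
move=> s_uniq st s_sorted.
have t_uniq : uniq t by rewrite -(perm_uniq st).
have sum_take u : uniq u -> \sum_(x <- take i u) p x = \sum_(x in [set x in take i u]) p x.
  by move=> u_uniq; rewrite big_uniq ?take_uniq //; apply: eq_bigl => x; rewrite inE.
rewrite !sum_take //; set A := [set x in take i s]; set B := [set x in take i t].
rewrite (big_setID B) [X in _ <= X](big_setID A) /= setIC lerD2l.
apply: sum_le_of_card_eq.
  rewrite !cardsD setIC !cardsE !(card_uniqP _) ?take_uniq //.
  by rewrite !size_take (perm_size st).
move=> x y; rewrite !inE => /andP[xB xA] /andP[yA yB].
have ys : y \in s by rewrite (perm_mem st) (mem_take yB).
have p_le_trans : transitive (fun x y => p x <= p y) by move=> ? ? ?; apply: le_trans.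
apply: (sorted_ltn_index p_le_trans s_sorted) => //; first exact: mem_take xA.
rewrite in_take // -leqNgt in yA.
exact: leq_trans (index_ltn xA) yA.
Qed.

End PrefixSums.

Section EqualWeights.
Variables (R : realFieldType) (J : finType) (p w : J -> R) (d : R).

Definition overrun (x : R) : R := if x < d then 0 else x - d.

Lemma overrun_homo : {homo overrun : x y / x <= y}.
Proof.
move=> x y le_xy; rewrite /overrun.
case: ltP => [_|le_dx]; case: ltP => [lt_yd|le_dy] //.
- by rewrite subr_ge0.
- by have := le_lt_trans (le_trans le_dx le_xy) lt_yd; rewrite ltxx.
- by rewrite lerD2r.
Qed.

Lemma size_schedule (u : seq J) : is_schedule u -> size u = #|J|.
Proof.
by case=> u_uniq u_all; rewrite -(card_uniqP u_uniq); apply: eq_card => x; rewrite u_all.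
Qed.

Lemma sum_start_time (F : R -> R) (u : seq J) : is_schedule u ->
  \sum_(j : J) F (start_time p u j) = \sum_(i < #|J|) F (\sum_(k <- take i u) p k).
Proof.
move=> u_sched.
rewrite -(big_mkord xpredT (fun i => F (\sum_(k <- take i u) p k))) -(size_schedule u_sched).
case: u_sched => u_uniq u_all.
have enum_u : perm_eq (index_enum J) u.
  by apply: uniq_perm; rewrite ?index_enum_uniq // => x; rewrite mem_index_enum u_all.
rewrite (perm_big _ enum_u); case: u u_uniq u_all {enum_u} => [|x0 u] u_uniq _.
  by rewrite !big_nil.
rewrite (big_nth x0); apply: eq_big_nat => i /andP[_ lt_i].
by rewrite /start_time index_uniq.
Qed.

Lemma cost_const_weight (c : R) (u : seq J) :
  (forall j, w j = c) -> is_schedule u ->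
  cost p w d u = c * (\sum_(j : J) p j + \sum_(i < #|J|) overrun (\sum_(k <- take i u) p k)).
Proof.
move=> w_c u_sched; rewrite /cost mulrDr mulr_sumr -sum_start_time // mulr_sumr -big_split.
apply: eq_bigr => j _; rewrite w_c /overrun /completion_time.
by case: ifP => _ /=; rewrite ?mulr0 ?addr0 // -mulrDr addrAC addrC.
Qed.

Lemma cost_le_of_take_sum_le (s t : seq J) :
  (forall j, 0 <= w j) -> (forall j k, w j = w k) -> is_schedule s -> is_schedule t ->
  (forall i, \sum_(k <- take i s) p k <= \sum_(k <- take i t) p k) ->
  cost p w d s <= cost p w d t.
Proof.
move=> w_ge0 w_eq s_sched t_sched le_take.
case: (pickP (@predT J)) => [j0 _|J0]; last by rewrite /cost !big_pred0.
rewrite !(@cost_const_weight (w j0)) //; apply: ler_wpM2l => //; rewrite lerD2l.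
by apply: ler_sum => i _; apply/overrun_homo/le_take.
Qed.

End EqualWeights.

Theorem theorem2 (R : realFieldType) (J : finType) (p w : J -> R) (d : R)
  (hp : forall j, 0 < p j) (hw : forall j, 0 < w j) (hd : 0 <= d)
  (hweq : forall j k, w j = w k)
  (s : seq J) (hs : is_schedule s) (hwspt : wspt p w s) :
  optimal p w d s.
Proof.
split=> // t t_sched.
have w_ge0 j : 0 <= w j by apply: ltW.
apply: cost_le_of_take_sum_le => // i.
case: hs t_sched => [s_uniq s_all] [t_uniq t_all].
apply: sorted_take_sum_le => //.
  by apply: uniq_perm => // j; rewrite s_all t_all.
apply: sub_sorted hwspt => j k /=.
by rewrite (hweq k j) ler_pM2r ?invr_gt0.
Qed.
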